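(* For every $q>0$, every $n\in\mathbb{N}$ and all $k,\ell\in\mathbb{Z}_+^n$, $$\frac{[|k+\ell|]_q!}{[k+\ell]_q!}\ \ge\ \frac{[|k|]_q!}{[k]_q!}\cdot\frac{[|\ell|]_q!}{[\ell]_q!}\cdot q^{\sum_{i<j}k_i\ell_j}.$$
   Context: For $q\in\mathbb{C}\setminus\{0\}$ and $m\in\mathbb{N}$: $[m]_q=1+q+\dots+q^{m-1}$, $[m]_q!=[1]_q[2]_q\cdots[m]_q$, $[0]_q!=1$. For $k=(k_1,\dots,k_n)\in\mathbb{Z}_+^n$: $[k]_q!=[k_1]_q!\cdots[k_n]_q!$ and $|k|=k_1+\dots+k_n$. *)

From HB Require Import structures.
From mathcomp Require Import all_boot all_order all_algebra.
Set Implicit Arguments. Unset Strict Implicit. Unset Printing Implicit Defensive.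
Import Order.TTheory GRing.Theory Num.Theory.
Local Open Scope ring_scope.

Definition qint {R : pzRingType} (q : R) (m : nat) : R := \sum_(i < m) q ^+ i.

Definition qfact {R : pzRingType} (q : R) (m : nat) : R :=
  \prod_(1 <= i < m.+1) qint q i.

(* multi-index versions: k : 'I_n -> nat represents k in Z_+^n *)
Definition qfactv {R : pzRingType} (q : R) (n : nat) (k : 'I_n -> nat) : R :=
  \prod_(i < n) qfact q (k i).

Definition absv (n : nat) (k : 'I_n -> nat) : nat := (\sum_(i < n) k i)%N.

From HB Require Import structures.
From mathcomp Require Import all_boot all_order all_algebra.
From mathcomp Require Import ring zify.
Set Implicit Arguments. Unset Strict Implicit. Unset Printing Implicit Defensive.
Import Order.TTheory GRing.Theory Num.Theory.
Local Open Scope ring_scope.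

(* Write [qbinom m r] for the q-binomial [m+r]!/([m]![r]!).  The quotient
   [|k|]!/[k]! peels off, coordinate by coordinate, as a product of such
   q-binomials, and the exponent of q splits accordingly; so everything
   reduces to the two-variable inequality
     q^(a d) qbinom a b * qbinom c d <= qbinom (a + c) (b + d),
   i.e. to one term of the q-Vandermonde expansion of the right-hand side.
   It follows by induction on c + d from the q-Pascal rule, all terms being
   positive for q > 0. *)

Section QFactorial.
Variables (R : pzRingType) (q : R).

Lemma qintD m r : qint q (m + r) = qint q m + q ^+ m * qint q r.
Proof.
elim: r => [|r IH]; first by rewrite addn0 /qint big_ord0 mulr0 addr0.
rewrite addnS /qint !big_ord_recr /= -!/(qint _ _) IH.
by rewrite mulrDr exprD addrA.
Qed.

Lemma qfact0 : qfact q 0 = 1.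
Proof. by rewrite /qfact big_geq. Qed.

Lemma qfactS m : qfact q m.+1 = qfact q m * qint q m.+1.
Proof. by rewrite /qfact big_nat_recr. Qed.

End QFactorial.

Section Positivity.
Variables (R : numDomainType) (q : R).
Hypothesis q_gt0 : 0 < q.

Lemma qint_gt0 m : 0 < qint q m.+1.
Proof.
rewrite /qint big_ord_recr /= ltr_wpDl ?exprn_gt0 //.
by apply: sumr_ge0 => i _; rewrite exprn_ge0 ?ltW.
Qed.

Lemma qfact_gt0 m : 0 < qfact q m.
Proof.
elim: m => [|m IH]; first by rewrite qfact0.
by rewrite qfactS mulr_gt0 ?qint_gt0.
Qed.

Lemma qfactv_gt0 n (k : 'I_n -> nat) : 0 < qfactv q k.
Proof. by apply: prodr_gt0 => i _; apply: qfact_gt0. Qed.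

End Positivity.

Section QCoefficients.
Variables (R : numFieldType) (q : R).
Hypothesis q_gt0 : 0 < q.

Let expr_ge0 m : 0 <= q ^+ m. Proof. exact/exprn_ge0/ltW. Qed.

Definition qbinom m r := qfact q (m + r) / (qfact q m * qfact q r).

Lemma qbinom_gt0 m r : 0 < qbinom m r.
Proof. by rewrite divr_gt0 ?mulr_gt0 ?qfact_gt0. Qed.

Lemma qbinom_ge0 m r : 0 <= qbinom m r.
Proof. exact/ltW/qbinom_gt0. Qed.

Lemma qbinomn0 m : qbinom m 0 = 1.
Proof. by rewrite /qbinom addn0 qfact0 mulr1 divff // gt_eqF ?qfact_gt0. Qed.

Lemma qbinom0n r : qbinom 0 r = 1.
Proof. by rewrite /qbinom add0n qfact0 mul1r divff // gt_eqF ?qfact_gt0. Qed.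

Lemma qbinomSS m r :
  qbinom m.+1 r.+1 = q ^+ m.+1 * qbinom m.+1 r + qbinom m r.+1.
Proof.
rewrite /qbinom !addSn addnS qfactS (qfactS q m) (qfactS q r).
have -> : qint q (m + r).+2 = qint q m.+1 + q ^+ m.+1 * qint q r.+1.
  by rewrite -qintD addSn addnS.
have := qfact_gt0 q_gt0 m; have := qfact_gt0 q_gt0 r.
have := qint_gt0 q_gt0 m; have := qint_gt0 q_gt0 r.
by move=> *; field; rewrite !gt_eqF.
Qed.

Lemma qbinom_leSl m r : qbinom m r <= qbinom m.+1 r.
Proof.
case: r => [|r]; first by rewrite !qbinomn0.
by rewrite qbinomSS ler_wpDl // mulr_ge0 ?expr_ge0 ?qbinom_ge0.
Qed.

Lemma qbinom_leDl m c r : qbinom m r <= qbinom (m + c) r.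
Proof.
elim: c => [|c IH]; first by rewrite addn0.
by rewrite addnS (le_trans IH) ?qbinom_leSl.
Qed.

Lemma qbinom_leSr m r : q ^+ m * qbinom m r <= qbinom m r.+1.
Proof.
case: m => [|m]; first by rewrite !qbinom0n expr0 mul1r.
by rewrite qbinomSS ler_wpDr ?qbinom_ge0.
Qed.

Lemma qbinom_leDr m r d : q ^+ (m * d) * qbinom m r <= qbinom m (r + d).
Proof.
elim: d => [|d IH]; first by rewrite muln0 expr0 mul1r addn0.
rewrite addnS (le_trans _ (qbinom_leSr m (r + d))) //.
by rewrite mulnS exprD -mulrA ler_wpM2l ?expr_ge0.
Qed.

Lemma qbinom_mul_le a b c d :
  q ^+ (a * d) * qbinom a b * qbinom c d <= qbinom (a + c) (b + d).
Proof.
move: {2}(c + d)%N (leqnn (c + d)) => s; elim: s c d => [|s IH] c d hs.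
  have [-> ->] : c = 0%N /\ d = 0%N by lia.
  by rewrite !addn0 muln0 expr0 mul1r qbinomn0 mulr1.
case: c hs => [|c] hs; first by rewrite qbinom0n mulr1 addn0 qbinom_leDr.
case: d hs => [|d] hs.
  by rewrite muln0 expr0 mul1r qbinomn0 mulr1 addn0 qbinom_leDl.
have IH1 := IH c.+1 d ltac:(lia); have IH2 := IH c d.+1 ltac:(lia).
rewrite !addnS in IH1 IH2 *.
rewrite [qbinom c.+1 _]qbinomSS qbinomSS.
have -> : q ^+ (a * d.+1) * qbinom a b
            * (q ^+ c.+1 * qbinom c.+1 d + qbinom c d.+1)
          = q ^+ (a + c).+1 * (q ^+ (a * d) * qbinom a b * qbinom c.+1 d)
            + q ^+ (a * d.+1) * qbinom a b * qbinom c d.+1.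
  by rewrite -addnS mulnS !exprD; ring.
by rewrite lerD // ler_wpM2l.
Qed.

Definition qmultinom n (k : 'I_n -> nat) := qfact q (absv k) / qfactv q k.

Definition cross_sum n (k l : 'I_n -> nat) : nat :=
  \sum_(i < n) \sum_(j < n | (i < j)%N) k i * l j.

Definition ord_init n (k : 'I_n.+1 -> nat) : 'I_n -> nat :=
  fun i => k (widen_ord (leqnSn n) i).

Lemma qmultinom_gt0 n (k : 'I_n -> nat) : 0 < qmultinom k.
Proof. by rewrite divr_gt0 ?qfact_gt0 ?qfactv_gt0. Qed.

Lemma qmultinom_ge0 n (k : 'I_n -> nat) : 0 <= qmultinom k.
Proof. exact/ltW/qmultinom_gt0. Qed.

Lemma qmultinom0 (k : 'I_0 -> nat) : qmultinom k = 1.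
Proof. by rewrite /qmultinom /absv /qfactv !big_ord0 qfact0 divr1. Qed.

Lemma qmultinom_recr n (k : 'I_n.+1 -> nat) :
  qmultinom k = qmultinom (ord_init k) * qbinom (absv (ord_init k)) (k ord_max).
Proof.
rewrite /qmultinom /qbinom /absv /qfactv !big_ord_recr /=.
have := qfact_gt0 q_gt0 (\sum_(i < n) ord_init k i)%N.
have := qfact_gt0 q_gt0 (k ord_max); have := qfactv_gt0 q_gt0 (ord_init k).
by rewrite /qfactv => *; field; rewrite !gt_eqF.
Qed.

Lemma cross_sum_recr n (k l : 'I_n.+1 -> nat) :
  cross_sum k l =
    (cross_sum (ord_init k) (ord_init l) + absv (ord_init k) * l ord_max)%N.
Proof.
rewrite /cross_sum big_ord_recr /= [X in (_ + X)%N]big1 ?addn0 => [|j].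
  2: by rewrite ltnNge -ltnS ltn_ord.
rewrite /absv big_distrl -big_split /=; apply: eq_bigr => i _.
by rewrite big_mkcond big_ord_recr /= -big_mkcond ltn_ord.
Qed.

Lemma qmultinom_mul_le n (k l : 'I_n -> nat) :
  qmultinom k * qmultinom l * q ^+ cross_sum k l
  <= qmultinom (fun i => k i + l i)%N.
Proof.
elim: n k l => [|n IH] k l.
  by rewrite !qmultinom0 !mul1r /cross_sum big_ord0.
rewrite cross_sum_recr !(qmultinom_recr (_ : 'I_n.+1 -> nat)) exprD.
have -> : absv (ord_init (fun i => k i + l i)%N)
          = (absv (ord_init k) + absv (ord_init l))%N by rewrite /absv big_split.
set K := ord_init k; set L := ord_init l.
have -> : qmultinom K * qbinom (absv K) (k ord_max)
            * (qmultinom L * qbinom (absv L) (l ord_max))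
            * (q ^+ cross_sum K L * q ^+ (absv K * l ord_max))
          = qmultinom K * qmultinom L * q ^+ cross_sum K L
            * (q ^+ (absv K * l ord_max) * qbinom (absv K) (k ord_max)
               * qbinom (absv L) (l ord_max)) by ring.
apply: ler_pM; [| |exact: IH|exact: qbinom_mul_le].
  by apply: mulr_ge0; [apply: mulr_ge0|]; rewrite ?expr_ge0 ?qmultinom_ge0.
by apply: mulr_ge0; [apply: mulr_ge0|]; rewrite ?expr_ge0 ?qbinom_ge0.
Qed.

End QCoefficients.

Theorem lemma3p7 (R : realFieldType) (q : R) (hq : 0 < q) (n : nat)
    (k l : 'I_n -> nat) :
  qfact q (absv k) / qfactv q k * (qfact q (absv l) / qfactv q l)
    * q ^+ (\sum_(i < n) \sum_(j < n | (i < j)%N) (k i * l j))%N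
  <= qfact q (absv (fun i => k i + l i)%N) / qfactv q (fun i => k i + l i)%N.
Proof. exact: qmultinom_mul_le. Qed.
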